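(* Let $C_{BZ}\subset V_{BZ}$ be the cone of BZ labellings with all nine coordinates nonnegative. Then $C_{BZ}$ has exactly eight extreme rays, spanned by the eight fundamental BZ triangles $\hat C_1,\hat C_2,\hat C_3,\hat D_1,\hat D_3,\hat D_5,\hat P,\hat Q$; these eight vectors generate the lattice $\Lambda_{BZ}$ as an abelian group, and the only linear relation among them (up to scaling) is $\hat D_1+\hat D_3+\hat D_5=\hat P+\hat Q$. The group $G_{BZ}$ of all group automorphisms of $\Lambda_{BZ}$ mapping the set of BZ triangles onto itself has order $72$; restriction to the fundamental BZ triangles identifies $G_{BZ}$ with the group of permutations of these eight vectors that map each of $\{\hat C_1,\hat C_2,\hat C_3\}$, $\{\hat D_1,\hat D_3,\hat D_5\}$, $\{\hat P,\hat Q\}$ to itself, so $G_{BZ}\cong\mathfrak{S}_3\times\mathfrak{S}_3\times\mathfrak{S}_2$.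
   Context: A BZ labelling is a vector $(y_1,y_2,y_3,z_1,\dots,z_6)\in\mathbb{R}^9$ satisfying $z_1-z_4=z_5-z_2=z_3-z_6$; these form a 7-dimensional subspace $V_{BZ}\subset\mathbb{R}^9$. Let $\Lambda_{BZ}=V_{BZ}\cap\mathbb{Z}^9$. A BZ triangle ($SU(3)$ Berenstein–Zelevinsky triangle) is an element of $\Lambda_{BZ}$ with all coordinates nonnegative. The fundamental BZ triangles are: $\hat C_i$ ($i=1,2,3$) with $y_i=1$ and all other coordinates $0$; $\hat D_1$ with $z_1=z_4=1$, others $0$; $\hat D_3$ with $z_3=z_6=1$, others $0$; $\hat D_5$ with $z_2=z_5=1$, others $0$; $\hat P$ with $z_1=z_3=z_5=1$, others $0$; $\hat Q$ with $z_2=z_4=z_6=1$, others $0$. *)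

From HB Require Import structures.
From mathcomp Require Import all_boot all_order all_algebra.
From mathcomp Require Import fingroup perm morphism gproduct.
From mathcomp Require Import ring lra zify.
Set Implicit Arguments. Unset Strict Implicit. Unset Printing Implicit Defensive.
Import Order.TTheory GRing.Theory Num.Theory.
Local Open Scope ring_scope.

(* Coordinates of a vector v : 'rV[R]_9 are ordered
   (y1, y2, y3, z1, z2, z3, z4, z5, z6), i.e. column 0 = y1, ..., column 2 = y3,
   column 3 = z1, column 4 = z2, ..., column 8 = z6. *)

(* BZ labelling condition: z1 - z4 = z5 - z2 = z3 - z6. *)
Definition bzb {R : zmodType} (v : 'rV[R]_9) : bool :=
  (v ord0 (inord 3) - v ord0 (inord 6) == v ord0 (inord 7) - v ord0 (inord 4)) &&
  (v ord0 (inord 7) - v ord0 (inord 4) == v ord0 (inord 5) - v ord0 (inord 8)).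

Definition nonneg {R : numDomainType} (v : 'rV[R]_9) : bool :=
  [forall j, 0 <= v ord0 j].

Definition C_BZ {R : numDomainType} (v : 'rV[R]_9) : Prop := bzb v /\ nonneg v.

Definition extreme_ray {R : numDomainType} (C : 'rV[R]_9 -> Prop) (v : 'rV[R]_9) : Prop :=
  C v /\ v != 0 /\
  forall a b, C a -> C b -> v = a + b -> exists t : R, 0 <= t /\ a = t *: v.

(* The eight fundamental BZ triangles, indexed by 'I_8 in the order
   C1, C2, C3, D1, D3, D5, P, Q. Each is given by its support. *)
Definition fund_support : seq (seq nat) :=
  [:: [:: 0%N]; [:: 1%N]; [:: 2%N];      (* C1 C2 C3 : y_i = 1 *)
      [:: 3%N; 6%N];                      (* D1 : z1 = z4 = 1 *)
      [:: 5%N; 8%N];                      (* D3 : z3 = z6 = 1 *)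
      [:: 4%N; 7%N];                      (* D5 : z2 = z5 = 1 *)
      [:: 3%N; 5%N; 7%N];                 (* P  : z1 = z3 = z5 = 1 *)
      [:: 4%N; 6%N; 8%N] ].               (* Q  : z2 = z4 = z6 = 1 *)

Definition fund {R : nzRingType} (i : 'I_8) : 'rV[R]_9 :=
  \row_(j < 9) (if (nat_of_ord j \in nth [::] fund_support i) then 1 else 0).

(* coefficients of the relation D1 + D3 + D5 - P - Q = 0 *)
Definition rel_coef {R : nzRingType} (i : 'I_8) : R :=
  if (i < 3)%N then 0 else if (i < 6)%N then 1 else -1.

Definition block (i : 'I_8) : nat := if (i < 3)%N then 0 else if (i < 6)%N then 1 else 2.

Definition block_perms : {set {perm 'I_8}} :=
  [set s : {perm 'I_8} | [forall i, block (s i) == block i]].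

Definition bzlab : {pred 'rV[int]_9} := fun v => bzb v.

Lemma bzlab_zmod_closed : zmod_closed bzlab.
Proof.
split; first by rewrite unfold_in /bzlab /bzb /= !mxE !subrr eqxx.
move=> u v; rewrite !unfold_in /bzlab /bzb /= !mxE.
move=> /andP[/eqP h1 /eqP h2] /andP[/eqP h3 /eqP h4].
apply/andP; split; apply/eqP.
- transitivity ((u ord0 (inord 3) - u ord0 (inord 6)) - (v ord0 (inord 3) - v ord0 (inord 6))); first by ring.
  by rewrite h1 h3; ring.
- transitivity ((u ord0 (inord 7) - u ord0 (inord 4)) - (v ord0 (inord 7) - v ord0 (inord 4))); first by ring.
  by rewrite h2 h4; ring.
Qed.
HB.instance Definition _ := GRing.isZmodClosed.Build _ bzlab bzlab_zmod_closed.

Inductive Lam : predArgType := LamSub (v : 'rV[int]_9) of v \in bzlab.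
Definition lamval (x : Lam) : 'rV[int]_9 := let: LamSub v _ := x in v.
HB.instance Definition _ := [isSub of Lam for lamval].
HB.instance Definition _ := [Choice of Lam by <:].
HB.instance Definition _ := [SubChoice_isSubZmodule of Lam by <:].

Definition bz_triangle (x : Lam) : bool := nonneg (val x).

Definition in_G_BZ (f : Lam -> Lam) : Prop :=
  (forall x y, f (x + y) = f x + f y) /\
  bijective f /\
  (forall x, bz_triangle x -> bz_triangle (f x)) /\
  (forall y, bz_triangle y -> exists2 x, bz_triangle x & f x = y).

(* A nonnegative BZ labelling is a nonnegative combination of the fundamental
   triangles, using P or Q according to the sign of the common difference
   z1 - z4.  The BZ equations force a labelling supported on the support of a
   fundamental triangle to be a multiple of it, so each fundamental triangle
   spans a face of dimension one: these are the extreme rays, and, with integer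
   coefficients, the fundamental triangles are the indecomposable BZ triangles
   and generate the lattice.  An automorphism preserving BZ triangles permutes
   the indecomposable ones and carries the relation D1 + D3 + D5 - P - Q = 0 to
   a relation; since the relation is unique up to scaling and its coefficients
   sum to 1, the permutation preserves the coefficients, i.e. the three blocks.
   Conversely a block permutation preserves the relation and so extends to an
   automorphism, unique because the fundamental triangles generate. *)

From HB Require Import structures.
From mathcomp Require Import all_boot all_order all_algebra.
From mathcomp Require Import fingroup perm morphism gproduct.
From mathcomp Require Import ring lra zify.
Set Implicit Arguments. Unset Strict Implicit. Unset Printing Implicit Defensive.
Import Order.TTheory GRing.Theory Num.Theory.
Local Open Scope ring_scope.

Notation o9 k := (@Ordinal 9 k isT).
Notation o8 k := (@Ordinal 8 k isT).

Definition vec9 {R : zmodType} (a0 a1 a2 a3 a4 a5 a6 a7 a8 : R) : 'rV[R]_9 :=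
  \row_(j < 9) nth 0 [:: a0; a1; a2; a3; a4; a5; a6; a7; a8] j.

Lemma vec9_ind (R : zmodType) (P : 'rV[R]_9 -> Prop) :
  (forall a0 a1 a2 a3 a4 a5 a6 a7 a8, P (vec9 a0 a1 a2 a3 a4 a5 a6 a7 a8)) -> forall v, P v.
Proof.
move=> H v; suff -> : v = vec9 (v ord0 (o9 0)) (v ord0 (o9 1)) (v ord0 (o9 2))
  (v ord0 (o9 3)) (v ord0 (o9 4)) (v ord0 (o9 5)) (v ord0 (o9 6)) (v ord0 (o9 7))
  (v ord0 (o9 8)) by [].
apply/rowP => j; rewrite mxE (ord1 ord0).
by case: j => [[|[|[|[|[|[|[|[|[|//]]]]]]]]] p] /=; congr (v _ _); apply: val_inj.
Qed.

Lemma I8_ind (P : 'I_8 -> Prop) : P (o8 0) -> P (o8 1) -> P (o8 2) -> P (o8 3) ->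
  P (o8 4) -> P (o8 5) -> P (o8 6) -> P (o8 7) -> forall i, P i.
Proof.
move=> h0 h1 h2 h3 h4 h5 h6 h7 [[|[|[|[|[|[|[|[|//]]]]]]]] p];
  by rewrite (bool_irrelevance p isT).
Qed.

Lemma vec9P (R : zmodType) (a0 a1 a2 a3 a4 a5 a6 a7 a8 b0 b1 b2 b3 b4 b5 b6 b7 b8 : R) :
  vec9 a0 a1 a2 a3 a4 a5 a6 a7 a8 = vec9 b0 b1 b2 b3 b4 b5 b6 b7 b8 <->
  [/\ a0 = b0, a1 = b1, a2 = b2, a3 = b3 & [/\ a4 = b4, a5 = b5, a6 = b6, a7 = b7 & a8 = b8]].
Proof.
split; last by case=> -> -> -> -> [-> -> -> -> ->].
move=> E; have F k : (k < 9)%N -> nth 0 [:: a0; a1; a2; a3; a4; a5; a6; a7; a8] k =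
                                  nth 0 [:: b0; b1; b2; b3; b4; b5; b6; b7; b8] k.
  by move=> lt_k9; have := congr1 (fun v : 'rV[R]_9 => v ord0 (Ordinal lt_k9)) E; rewrite !mxE.
by split; [exact: (F 0%N)|exact: (F 1%N)|exact: (F 2%N)|exact: (F 3%N)|
  split; [exact: (F 4%N)|exact: (F 5%N)|exact: (F 6%N)|exact: (F 7%N)|exact: (F 8%N)]].
Qed.

Lemma vec9D (R : zmodType) (a0 a1 a2 a3 a4 a5 a6 a7 a8 b0 b1 b2 b3 b4 b5 b6 b7 b8 : R) :
  vec9 a0 a1 a2 a3 a4 a5 a6 a7 a8 + vec9 b0 b1 b2 b3 b4 b5 b6 b7 b8 =
  vec9 (a0 + b0) (a1 + b1) (a2 + b2) (a3 + b3) (a4 + b4) (a5 + b5) (a6 + b6) (a7 + b7) (a8 + b8).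
Proof. by apply/rowP => j; rewrite !mxE; case: j => [[|[|[|[|[|[|[|[|[|//]]]]]]]]] p]. Qed.

Lemma vec9Z (R : nzRingType) (t a0 a1 a2 a3 a4 a5 a6 a7 a8 : R) :
  t *: vec9 a0 a1 a2 a3 a4 a5 a6 a7 a8 =
  vec9 (t * a0) (t * a1) (t * a2) (t * a3) (t * a4) (t * a5) (t * a6) (t * a7) (t * a8).
Proof. by apply/rowP => j; rewrite !mxE; case: j => [[|[|[|[|[|[|[|[|[|//]]]]]]]]] p]. Qed.

Lemma vec90 (R : zmodType) : 0 = vec9 0 0 0 0 0 0 0 0 0 :> 'rV[R]_9.
Proof. by apply/rowP => j; rewrite !mxE; case: j => [[|[|[|[|[|[|[|[|[|//]]]]]]]]] p]. Qed.

Lemma bzb_vec9 (R : zmodType) (a0 a1 a2 a3 a4 a5 a6 a7 a8 : R) :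
  bzb (vec9 a0 a1 a2 a3 a4 a5 a6 a7 a8) = (a3 - a6 == a7 - a4) && (a7 - a4 == a5 - a8).
Proof. by rewrite /bzb !mxE !inordK. Qed.

Lemma nonneg_vec9 (R : numDomainType) (a0 a1 a2 a3 a4 a5 a6 a7 a8 : R) :
  nonneg (vec9 a0 a1 a2 a3 a4 a5 a6 a7 a8) <->
  [/\ 0 <= a0, 0 <= a1, 0 <= a2, 0 <= a3 & [/\ 0 <= a4, 0 <= a5, 0 <= a6, 0 <= a7 & 0 <= a8]].
Proof.
split; last first.
  case=> h0 h1 h2 h3 [h4 h5 h6 h7 h8]; apply/forallP => j; rewrite mxE.
  by case: j => [[|[|[|[|[|[|[|[|[|//]]]]]]]]] p].
move/forallP => H; have F k : (k < 9)%N -> 0 <= nth 0 [:: a0; a1; a2; a3; a4; a5; a6; a7; a8] k.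
  by move=> lt_k9; have := H (Ordinal lt_k9); rewrite mxE.
by split; [exact: (F 0%N)|exact: (F 1%N)|exact: (F 2%N)|exact: (F 3%N)|
  split; [exact: (F 4%N)|exact: (F 5%N)|exact: (F 6%N)|exact: (F 7%N)|exact: (F 8%N)]].
Qed.

Lemma fundE (R : nzRingType) (i : 'I_8) : fund i = nth 0
  [:: vec9 1 0 0 0 0 0 0 0 0; vec9 0 1 0 0 0 0 0 0 0; vec9 0 0 1 0 0 0 0 0 0;
      vec9 0 0 0 1 0 0 1 0 0; vec9 0 0 0 0 0 1 0 0 1; vec9 0 0 0 0 1 0 0 1 0;
      vec9 0 0 0 1 0 1 0 1 0; vec9 0 0 0 0 1 0 1 0 1] i :> 'rV[R]_9.
Proof.
by elim/I8_ind: i; apply/rowP => j; rewrite !mxE;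
  case: j => [[|[|[|[|[|[|[|[|[|//]]]]]]]]] p].
Qed.

Lemma sum_fundE (R : comNzRingType) (e : 'I_8 -> R) :
  \sum_(k < 8) e k *: fund k = vec9 (e (o8 0)) (e (o8 1)) (e (o8 2))
    (e (o8 3) + e (o8 6)) (e (o8 5) + e (o8 7)) (e (o8 4) + e (o8 6))
    (e (o8 3) + e (o8 7)) (e (o8 5) + e (o8 6)) (e (o8 4) + e (o8 7)).
Proof.
rewrite !big_ord_recl big_ord0 addr0.
rewrite (_ : lift ord0 ord0 = o8 1); last exact: val_inj.
rewrite (_ : lift ord0 (lift ord0 ord0) = o8 2); last exact: val_inj.
rewrite (_ : lift ord0 (lift ord0 (lift ord0 ord0)) = o8 3); last exact: val_inj.
rewrite (_ : lift ord0 (lift ord0 (lift ord0 (lift ord0 ord0))) = o8 4); last exact: val_inj.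
rewrite (_ : lift ord0 (lift ord0 (lift ord0 (lift ord0 (lift ord0 ord0)))) = o8 5);
  last exact: val_inj.
rewrite (_ : lift ord0 (lift ord0 (lift ord0 (lift ord0 (lift ord0 (lift ord0 ord0))))) = o8 6);
  last exact: val_inj.
rewrite (_ : lift ord0 (lift ord0 (lift ord0 (lift ord0 (lift ord0 (lift ord0
  (lift ord0 ord0)))))) = o8 7); last exact: val_inj.
rewrite (_ : ord0 = o8 0); last exact: val_inj.
rewrite !fundE /= !vec9Z !vec9D.
by apply/vec9P; split; [ | | | | split]; ring.
Qed.

Lemma bzbD (R : zmodType) (u v : 'rV[R]_9) : bzb u -> bzb v -> bzb (u + v).
Proof.
elim/vec9_ind: u => a0 a1 a2 a3 a4 a5 a6 a7 a8; elim/vec9_ind: v => b0 b1 b2 b3 b4 b5 b6 b7 b8.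
rewrite vec9D !bzb_vec9 => /andP[/eqP h1 /eqP h2] /andP[/eqP h3 /eqP h4].
apply/andP; split; apply/eqP.
  by rewrite opprD addrACA h3 h1 -addrACA -opprD.
by rewrite opprD addrACA h4 h2 -addrACA -opprD.
Qed.

Lemma bzbZ (R : comNzRingType) (c : R) (v : 'rV[R]_9) : bzb v -> bzb (c *: v).
Proof.
elim/vec9_ind: v => b0 b1 b2 b3 b4 b5 b6 b7 b8.
rewrite vec9Z !bzb_vec9 -!mulrBr => /andP[/eqP -> /eqP ->].
by rewrite !eqxx.
Qed.

Lemma bzb_fund (R : nzRingType) i : bzb (fund i : 'rV[R]_9).
Proof.
by elim/I8_ind: i; rewrite !fundE /= bzb_vec9 ?subrr ?subr0 ?eqxx.
Qed.

Lemma bzb_comb_fund (R : comNzRingType) (e : 'I_8 -> R) (s : 'I_8 -> 'I_8) :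
  bzb (\sum_k e k *: fund (s k)).
Proof.
apply: (big_ind (fun v : 'rV[R]_9 => bzb v)); [|exact: bzbD|].
  by rewrite (vec90 R) bzb_vec9 subrr eqxx.
by move=> k _; exact/bzbZ/bzb_fund.
Qed.

Lemma nonneg_comb_fund (R : numDomainType) (e : 'I_8 -> R) (s : 'I_8 -> 'I_8) :
  (forall k, 0 <= e k) -> nonneg (\sum_k e k *: fund (s k)).
Proof.
move=> e_ge0; apply/forallP => j; rewrite summxE; apply: sumr_ge0 => k _.
by rewrite !mxE mulr_ge0 //; case: ifP.
Qed.

Definition fund_pivot (i : 'I_8) : 'I_9 := inord (nth 0%N [:: 0; 1; 2; 3; 5; 4; 3; 4]%N i).

Lemma fund_pivotE (R : nzRingType) i : (fund i : 'rV[R]_9) ord0 (fund_pivot i) = 1.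
Proof. by elim/I8_ind: i; rewrite /fund_pivot mxE inordK. Qed.

Lemma scale_fund_eq0 (R : nzRingType) (c : R) k : c *: (fund k : 'rV[R]_9) = 0 -> c = 0.
Proof.
move/(congr1 (fun v : 'rV[R]_9 => v ord0 (fund_pivot k))).
by rewrite [in X in X = _]mxE fund_pivotE mulr1 mxE.
Qed.

Lemma fund_neq0 (R : nzRingType) i : (fund i : 'rV[R]_9) != 0.
Proof.
apply: contraNneq (oner_neq0 R) => fund0.
by apply/eqP/(@scale_fund_eq0 _ _ i); rewrite scale1r.
Qed.

Lemma sum_rel_coef_fund (R : comNzRingType) : \sum_k rel_coef k *: (fund k : 'rV[R]_9) = 0.
Proof.
by rewrite sum_fundE /rel_coef /= vec90; apply/vec9P; split; [ | | | | split]; ring.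
Qed.

Lemma fund_relation (R : realDomainType) (c : 'I_8 -> R) :
  \sum_(i < 8) c i *: fund i = 0 <-> exists t : R, forall i, c i = t * rel_coef i.
Proof.
split=> [|[t ct]].
  rewrite sum_fundE vec90 => /vec9P [h0 h1 h2 h3 [h4 h5 h6 h7 h8]].
  by exists (c (o8 3)); elim/I8_ind; rewrite /rel_coef /=; lra.
under eq_bigr do rewrite ct -scalerA.
by rewrite -scaler_sumr sum_rel_coef_fund scaler0.
Qed.

Lemma fund_ray_inj (R : realDomainType) (i j : 'I_8) (t : R) :
  0 < t -> fund i = t *: fund j -> i = j.
Proof.
move=> t_gt0; elim/I8_ind: i; elim/I8_ind: j => //;
  rewrite !fundE /= vec9Z => /vec9P; rewrite ?mulr0 ?mulr1;
  case=> h0 h1 h2 h3 [h4 h5 h6 h7 h8]; exfalso; lra.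
Qed.

(* Two cases according to the sign of the common difference z1 - z4: the
   positive part is carried by P, the negative one by Q. *)
Lemma C_BZ_comb_fund (R : realDomainType) (v : 'rV[R]_9) : C_BZ v ->
  exists2 e : 'I_8 -> R, forall k, 0 <= e k & v = \sum_k e k *: fund k.
Proof.
case; elim/vec9_ind: v => a0 a1 a2 a3 a4 a5 a6 a7 a8.
rewrite bzb_vec9 => /andP[/eqP h1 /eqP h2] /nonneg_vec9 [g0 g1 g2 g3 [g4 g5 g6 g7 g8]].
have [z14_ge0|z14_lt0] := leP 0 (a3 - a6).
  exists (fun k : 'I_8 => nth 0 [:: a0; a1; a2; a6; a8; a4; a3 - a6; 0] k); first by elim/I8_ind.
  by rewrite sum_fundE /=; apply/vec9P; split; [ | | | | split]; lra.
exists (fun k : 'I_8 => nth 0 [:: a0; a1; a2; a3; a5; a7; 0; a6 - a3] k).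
  by elim/I8_ind => //=; lra.
by rewrite sum_fundE /=; apply/vec9P; split; [ | | | | split]; lra.
Qed.

Lemma bzb_supported_fund (R : realDomainType) (a : 'rV[R]_9) (i : 'I_8) : bzb a ->
  (forall j : 'I_9, (j : nat) \notin nth [::] fund_support i -> a ord0 j = 0) ->
  a = a ord0 (fund_pivot i) *: fund i.
Proof.
elim/vec9_ind: a => a0 a1 a2 a3 a4 a5 a6 a7 a8.
rewrite bzb_vec9 => /andP[/eqP h1 /eqP h2] supp_a.
have a_eq0 k (lt_k9 : (k < 9)%N) := supp_a (Ordinal lt_k9).
move: (a_eq0 0%N isT) (a_eq0 1%N isT) (a_eq0 2%N isT) (a_eq0 3%N isT) (a_eq0 4%N isT)
  (a_eq0 5%N isT) (a_eq0 6%N isT) (a_eq0 7%N isT) (a_eq0 8%N isT).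
clear a_eq0 supp_a; rewrite !mxE /=; elim/I8_ind: i; rewrite /fund_pivot inordK //=;
  rewrite !fundE /= !vec9Z ?inE /= => e0 e1 e2 e3 e4 e5 e6 e7 e8;
  repeat match goal with e : is_true true -> _ |- _ => move/(_ isT): e => e end;
  apply/vec9P; rewrite ?mulr0 ?mulr1.
all: by split; [ | | | | split]; lra.
Qed.

Lemma C_BZ_scale_fund (R : realDomainType) (c : R) i : 0 <= c -> C_BZ (c *: fund i).
Proof.
move=> c_ge0; split; first exact/bzbZ/bzb_fund.
by apply/forallP => j; rewrite !mxE mulr_ge0 //; case: ifP.
Qed.

Lemma C_BZ_fund (R : realDomainType) i : C_BZ (fund i : 'rV[R]_9).
Proof. by rewrite -[fund i]scale1r; exact: C_BZ_scale_fund. Qed.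

Lemma C_BZ_summand_fund (R : realDomainType) (a b : 'rV[R]_9) (t : R) i :
  C_BZ a -> C_BZ b -> a + b = t *: fund i -> a = a ord0 (fund_pivot i) *: fund i.
Proof.
case=> bz_a /forallP a_ge0 [_ /forallP b_ge0] ab_eq.
apply: bzb_supported_fund => // j j_notin.
have := congr1 (fun v : 'rV[R]_9 => v ord0 j) ab_eq.
rewrite !mxE (negbTE j_notin) mulr0 => /eqP.
by rewrite paddr_eq0 // => /andP[/eqP].
Qed.

Lemma C_BZ_split_fund (R : realDomainType) (v : 'rV[R]_9) : C_BZ v -> v != 0 ->
  exists k (c : R) (w : 'rV[R]_9), [/\ 0 < c, C_BZ w & v = c *: fund k + w].
Proof.
move=> Cv; have [e e_ge0 ->] := C_BZ_comb_fund Cv => comb_neq0.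
have [k e_k_gt0] : exists k, 0 < e k.
  case: (pickP (fun k => 0 < e k)) => [k|e_le0]; first by exists k.
  case/eqP: comb_neq0; apply: big1 => k _.
  by move: (e_ge0 k); rewrite le_eqVlt e_le0 orbF => /eqP <-; rewrite scale0r.
exists k, (e k), (\sum_j (if j == k then 0 else e j) *: fund j); split => //.
  split; first exact: bzb_comb_fund.
  by apply: nonneg_comb_fund => j; case: ifP.
rewrite (bigD1 k) //= [X in _ = _ + X](bigD1 k) //= eqxx scale0r add0r.
by congr (_ + _); apply: eq_bigr => j /negbTE ->.
Qed.

Lemma extreme_ray_C_BZ (R : realFieldType) (v : 'rV[R]_9) :
  extreme_ray C_BZ v <-> exists i : 'I_8, exists2 t : R, 0 < t & v = t *: fund i.
Proof.
split=> [[Cv [v_neq0 v_ext]] | [i [t t_gt0 ->]]].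
  have [k [c [w [c_gt0 Cw v_eq]]]] := C_BZ_split_fund Cv v_neq0.
  have [s [s_ge0 cfund_eq]] := v_ext _ _ (C_BZ_scale_fund k (ltW c_gt0)) Cw v_eq.
  have s_neq0 : s != 0.
    apply: contraTneq c_gt0 => s0; move: cfund_eq; rewrite s0 scale0r.
    by move/scale_fund_eq0 ->; rewrite ltxx.
  exists k, (s^-1 * c); first by rewrite mulr_gt0 // invr_gt0 lt_def s_neq0.
  by rewrite -scalerA cfund_eq scalerA mulVf // scale1r.
split; first exact/C_BZ_scale_fund/ltW.
split; first by rewrite scaler_eq0 negb_or gt_eqF // fund_neq0.
move=> a b Ca Cb ab_eq; have [_ /forallP a_ge0] := Ca.
exists (a ord0 (fund_pivot i) / t); split; first by rewrite divr_ge0 // ltW.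
by rewrite scalerA divfK ?gt_eqF //; exact: C_BZ_summand_fund Ca Cb (esym ab_eq).
Qed.

(* The coefficients of the case z1 >= z4 of [C_BZ_comb_fund]; the identity
   [bzcoefE] holds for every BZ labelling once negative coefficients are allowed. *)
Definition bzcoef (v : 'rV[int]_9) (k : 'I_8) : int :=
  nth 0 [:: v ord0 (o9 0); v ord0 (o9 1); v ord0 (o9 2); v ord0 (o9 6); v ord0 (o9 8);
            v ord0 (o9 4); v ord0 (o9 3) - v ord0 (o9 6); 0] k.

Lemma bzcoefE (v : 'rV[int]_9) : bzb v -> v = \sum_k bzcoef v k *: fund k.
Proof.
elim/vec9_ind: v => a0 a1 a2 a3 a4 a5 a6 a7 a8.
rewrite bzb_vec9 => /andP[/eqP h1 /eqP h2].
by rewrite sum_fundE /bzcoef /= !mxE /=; apply/vec9P; split; [ | | | | split]; lia.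
Qed.

Lemma val_lam0 : val (0 : Lam) = 0.
Proof. exact: raddf0. Qed.

Lemma val_lamD (x y : Lam) : val (x + y) = val x + val y.
Proof. exact: raddfD. Qed.

Lemma val_lamMz (x : Lam) n : val (x *~ n) = val x *~ n.
Proof. exact: raddfMz. Qed.

Lemma val_lam_sum (I : Type) (r : seq I) (P : pred I) (F : I -> Lam) :
  val (\sum_(i <- r | P i) F i) = \sum_(i <- r | P i) val (F i).
Proof. exact: raddf_sum. Qed.

Lemma bzb_val (x : Lam) : bzb (val x).
Proof. by have := valP x; rewrite unfold_in. Qed.

Lemma fund_in_bzlab i : (fund i : 'rV[int]_9) \in bzlab.
Proof. by rewrite unfold_in; exact: bzb_fund. Qed.

Definition lam_fund (i : 'I_8) : Lam := Sub (fund i) (fund_in_bzlab i).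

Lemma lam_fundE i : val (lam_fund i) = fund i.
Proof. by rewrite SubK. Qed.

Lemma lam_fund_inj : injective lam_fund.
Proof.
move=> i j /(congr1 val); rewrite !lam_fundE => fund_ij.
by apply: (@fund_ray_inj int i j 1) => //; rewrite scale1r.
Qed.

Lemma Lam_comb_fund (x : Lam) : x = \sum_k lam_fund k *~ bzcoef (val x) k.
Proof.
apply: val_inj; rewrite val_lam_sum {1}(bzcoefE (bzb_val x)).
by apply: eq_bigr => k _; rewrite val_lamMz lam_fundE -scaler_int intz.
Qed.

Lemma sum_rel_coef_lam_fund : \sum_k lam_fund k *~ rel_coef k = 0.
Proof.
apply: val_inj; rewrite val_lam0 -(sum_rel_coef_fund int) val_lam_sum.
by apply: eq_bigr => k _; rewrite val_lamMz lam_fundE -scaler_int intz.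
Qed.

Definition indecomposable (x : Lam) : Prop :=
  [/\ bz_triangle x, x != 0 &
      forall a b, bz_triangle a -> bz_triangle b -> x = a + b -> a = 0 \/ b = 0].

Lemma C_BZ_indecomposable_fund (v : 'rV[int]_9) : C_BZ v -> v != 0 ->
  (forall a b, C_BZ a -> C_BZ b -> v = a + b -> a = 0 \/ b = 0) -> exists i, v = fund i.
Proof.
move=> Cv v_neq0 v_indec.
have [k [c [w [c_gt0 Cw v_eq]]]] := C_BZ_split_fund Cv v_neq0.
have Cc : C_BZ (c *: fund k) by apply: C_BZ_scale_fund; rewrite ltW.
have {}v_eq : v = c *: fund k.
  case: (v_indec _ _ Cc Cw v_eq) => [/scale_fund_eq0 c0|w0]; last by rewrite v_eq w0 addr0.
  by move: c_gt0; rewrite c0 ltxx.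
have Cc1 : C_BZ ((c - 1) *: fund k) by apply: (C_BZ_scale_fund k); lia.
case: (v_indec _ _ (C_BZ_scale_fund k ler01) Cc1).
- by rewrite v_eq -scalerDl addrC subrK.
- by rewrite scale1r => /eqP; rewrite (negbTE (fund_neq0 _ k)).
by move/scale_fund_eq0 => c1; exists k; rewrite v_eq (_ : c = 1) ?scale1r //; lia.
Qed.

Lemma fund_indecomposable (a b : 'rV[int]_9) i : C_BZ a -> C_BZ b ->
  fund i = a + b -> a = 0 \/ b = 0.
Proof.
move=> Ca Cb ab_eq; have [_ /forallP a_ge0] := Ca; have [_ /forallP b_ge0] := Cb.
have one_eq := congr1 (fun v : 'rV[int]_9 => v ord0 (fund_pivot i)) ab_eq.
rewrite /= fund_pivotE mxE in one_eq.
have a_eq : a = a ord0 (fund_pivot i) *: fund i.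
  by apply: (C_BZ_summand_fund (t := 1) Ca Cb); rewrite scale1r.
have b_eq : b = b ord0 (fund_pivot i) *: fund i.
  by apply: (C_BZ_summand_fund (t := 1) Cb Ca); rewrite scale1r addrC.
have a_p := a_ge0 (fund_pivot i); have b_p := b_ge0 (fund_pivot i).
have [ap0|bp0] : a ord0 (fund_pivot i) = 0 \/ b ord0 (fund_pivot i) = 0.
  by move: one_eq a_p b_p; move: (a ord0 _) (b ord0 _) => x y; lia.
  by left; rewrite a_eq ap0 scale0r.
by right; rewrite b_eq bp0 scale0r.
Qed.

Lemma indecomposableP (x : Lam) : indecomposable x <-> exists i, val x = fund i.
Proof.
split=> [[x_tri x_neq0 x_indec] | [i x_eq]].
  apply: C_BZ_indecomposable_fund => [||a b [bz_a a_ge0] [bz_b b_ge0] x_eq].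
  - by split; [exact: bzb_val | exact: x_tri].
  - by apply: contra x_neq0 => /eqP x0; apply/eqP/val_inj; rewrite x0 val_lam0.
  have a_in : a \in bzlab by rewrite unfold_in.
  have b_in : b \in bzlab by rewrite unfold_in.
  have [] := x_indec (Sub a a_in) (Sub b b_in); rewrite /bz_triangle ?SubK //.
  - by apply: val_inj; rewrite val_lamD !SubK.
  - by move/(congr1 val); rewrite SubK val_lam0; left.
  by move/(congr1 val); rewrite SubK val_lam0; right.
split.
- by rewrite /bz_triangle x_eq; have [] := C_BZ_fund int i.
- by apply: contra_neq (fund_neq0 int i) => x0; rewrite -x_eq x0 val_lam0.
move=> a b a_tri b_tri x_ab.
have [a0|b0] : val a = 0 \/ val b = 0.
  apply: (fund_indecomposable (i := i)); rewrite ?x_eq -?val_lamD -?x_ab //;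
    by split => //; exact: bzb_val.
  by left; apply: val_inj; rewrite a0 val_lam0.
by right; apply: val_inj; rewrite b0 val_lam0.
Qed.

Section AdditiveFun.

Variables (U V : zmodType) (f : U -> V).
Hypothesis fD : {morph f : x y / x + y}.

Lemma additive_fun0 : f 0 = 0.
Proof. by apply: (addrI (f 0)); rewrite -fD !addr0. Qed.

Lemma additive_funMz x n : f (x *~ n) = f x *~ n.
Proof.
have fMn m : f (x *+ m) = f x *+ m.
  by elim: m => [|m IHm]; rewrite ?mulr0n ?additive_fun0 // !mulrS fD IHm.
have fN y : f (- y) = - f y.
  by apply: (addIr (f y)); rewrite -fD !addNr additive_fun0.
by case: n => m; rewrite ?NegzE ?mulrNz ?fN fMn.
Qed.

Lemma additive_fun_sum (I : Type) (r : seq I) (P : pred I) (F : I -> U) :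
  f (\sum_(i <- r | P i) F i) = \sum_(i <- r | P i) f (F i).
Proof. exact: (big_morph f fD additive_fun0). Qed.

End AdditiveFun.

Lemma in_G_BZ_indecomposable f x : in_G_BZ f -> indecomposable x -> indecomposable (f x).
Proof.
case=> fD [[g fK gK] [f_tri f_onto]] [x_tri x_neq0 x_indec]; split; first exact: f_tri.
  apply/eqP => fx0; case/eqP: x_neq0.
  by rewrite -(fK x) fx0 -{1}(additive_fun0 fD) fK.
move=> a b a_tri b_tri.
have [a' a'_tri <-] := f_onto a a_tri; have [b' b'_tri <-] := f_onto b b_tri.
rewrite -fD => /(can_inj fK) x_eq.
by case: (x_indec a' b' a'_tri b'_tri x_eq) => ->; [left|right]; exact: additive_fun0.
Qed.

Definition G_perm_fun (f : Lam -> Lam) (i : 'I_8) : 'I_8 :=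
  odflt i [pick j | val (f (lam_fund i)) == fund j].

Lemma G_perm_funE f i : in_G_BZ f -> val (f (lam_fund i)) = fund (G_perm_fun f i).
Proof.
move=> fG; have [j fi_eq] : exists j, val (f (lam_fund i)) = fund j.
  apply/indecomposableP/in_G_BZ_indecomposable/indecomposableP => //.
  by exists i; exact: lam_fundE.
by rewrite /G_perm_fun; case: pickP => [k /eqP // | /(_ j)]; rewrite fi_eq eqxx.
Qed.

Lemma G_perm_fun_inj f : in_G_BZ f -> injective (G_perm_fun f).
Proof.
move=> fG i j eq_ij; have [_ [[g fK _] _]] := fG.
apply: lam_fund_inj; rewrite -(fK (lam_fund i)) -(fK (lam_fund j)); congr g.
by apply: val_inj; rewrite !G_perm_funE // eq_ij.
Qed.

Definition G_perm f (fG : in_G_BZ f) : {perm 'I_8} := perm (G_perm_fun_inj fG).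

Lemma block_rel_coef (i j : 'I_8) : (block i == block j) = (rel_coef i == rel_coef j :> int).
Proof. by rewrite /block /rel_coef; do !case: ifP. Qed.

Lemma block_permsP (s : {perm 'I_8}) :
  reflect (forall k, rel_coef (s k) = rel_coef k :> int) (s \in block_perms).
Proof.
rewrite inE; apply: (iffP forallP) => [s_block k | s_rel k].
  by apply/eqP; rewrite -block_rel_coef s_block.
by rewrite block_rel_coef s_rel.
Qed.

Lemma sum_rel_coef : \sum_k (rel_coef k : int) = 1.
Proof. by rewrite !big_ord_recl big_ord0 /rel_coef. Qed.

Lemma sum_perm_fund (s : {perm 'I_8}) (e : 'I_8 -> int) :
  \sum_k e k *: fund (s k) = \sum_k e ((s^-1)%g k) *: fund k :> 'rV[int]_9.
Proof. by rewrite [RHS](reindex_inj (@perm_inj _ s)); apply: eq_bigr => k _; rewrite permK. Qed.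

(* Since the relation is unique up to scaling and its coefficients sum to 1,
   a permutation carrying it to a relation must fix its coefficients. *)
Lemma perm_fund_relation (s : {perm 'I_8}) :
  \sum_k rel_coef k *: fund (s k) = 0 :> 'rV[int]_9 -> s \in block_perms.
Proof.
rewrite sum_perm_fund => /fund_relation [t rel_t]; have t1 : t = 1.
  have : \sum_j rel_coef ((s^-1)%g j) = \sum_j t * rel_coef j :> int.
    by apply: eq_bigr => j _; exact: rel_t.
  rewrite -mulr_sumr sum_rel_coef mulr1 => <-.
  rewrite (reindex_inj (@perm_inj _ s)) -[RHS]sum_rel_coef.
  by apply: eq_bigr => k _; rewrite permK.
by apply/block_permsP => k; have := rel_t (s k); rewrite permK t1 mul1r.
Qed.

Lemma G_perm_block f (fG : in_G_BZ f) : G_perm fG \in block_perms.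
Proof.
apply: perm_fund_relation; have [fD _] := fG.
have := congr1 (fun x => val (f x)) sum_rel_coef_lam_fund.
rewrite /= (additive_fun0 fD) val_lam0 (additive_fun_sum fD) val_lam_sum => rel_f.
rewrite -[RHS]rel_f.
apply: eq_bigr => k _.
by rewrite (additive_funMz fD) val_lamMz G_perm_funE // permE -scaler_int intz.
Qed.

Lemma G_permE f (fG : in_G_BZ f) (x : Lam) i : val x = fund i -> val (f x) = fund (G_perm fG i).
Proof.
by move=> x_eq; rewrite (_ : x = lam_fund i) ?G_perm_funE ?permE //; apply: val_inj; rewrite lam_fundE.
Qed.

Lemma in_G_BZ_eq_fund f g : in_G_BZ f -> in_G_BZ g ->
  (forall (x : Lam) (i : 'I_8), val x = fund i -> f x = g x) -> f =1 g.
Proof.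
move=> [fD _] [gD _] fg_fund x; rewrite (Lam_comb_fund x).
rewrite (additive_fun_sum fD) (additive_fun_sum gD); apply: eq_bigr => k _.
by rewrite (additive_funMz fD) (additive_funMz gD) (fg_fund _ k (lam_fundE k)).
Qed.

Section BlockPermLift.

Variable s : {perm 'I_8}.
Hypothesis s_block : s \in block_perms.

Definition perm_lift_vec (v : 'rV[int]_9) : 'rV[int]_9 := \sum_k bzcoef v k *: fund (s k).

(* Well defined on all integer combinations because s preserves the unique relation. *)
Lemma perm_lift_vec_comb (e : 'I_8 -> int) :
  perm_lift_vec (\sum_k e k *: fund k) = \sum_k e k *: fund (s k).
Proof.
set v := \sum_k e k *: fund k.
have : \sum_k (e k - bzcoef v k) *: (fund k : 'rV[int]_9) = 0.
  under eq_bigr do rewrite scalerBl.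
  by rewrite sumrB -bzcoefE ?subrr //; exact: bzb_comb_fund.
case/fund_relation => t rel_t.
have := sum_rel_coef_fund int; rewrite (reindex_inj (@perm_inj _ s)) /= => rel_s.
apply/eqP; rewrite eq_sym -subr_eq0 -sumrB.
under eq_bigr do rewrite -scalerBl rel_t -(block_permsP _ s_block) -scalerA.
by rewrite -scaler_sumr rel_s scaler0.
Qed.

Lemma perm_lift_vecD u v : bzb u -> bzb v ->
  perm_lift_vec (u + v) = perm_lift_vec u + perm_lift_vec v.
Proof.
move=> bz_u bz_v; rewrite {1}(bzcoefE bz_u) {1}(bzcoefE bz_v) -big_split /=.
under eq_bigr do rewrite -scalerDl.
by rewrite perm_lift_vec_comb -big_split; apply: eq_bigr => k _; rewrite scalerDl.
Qed.

Lemma perm_lift_vec_in v : perm_lift_vec v \in bzlab.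
Proof. by rewrite unfold_in; exact: bzb_comb_fund. Qed.

Definition perm_lift (x : Lam) : Lam := Sub (perm_lift_vec (val x)) (perm_lift_vec_in (val x)).

Lemma perm_liftE x : val (perm_lift x) = perm_lift_vec (val x).
Proof. by rewrite SubK. Qed.

Lemma perm_lift_fund x i : val x = fund i -> val (perm_lift x) = fund (s i).
Proof.
move=> x_eq; have delta (F : 'I_8 -> 'rV[int]_9) j : \sum_k (k == j)%:R *: F k = F j.
  by rewrite (bigD1 j) //= eqxx scale1r big1 ?addr0 // => k /negbTE ->; rewrite scale0r.
by rewrite perm_liftE x_eq -(delta fund i) perm_lift_vec_comb delta.
Qed.

Lemma perm_lift_triangle x : bz_triangle x -> bz_triangle (perm_lift x).
Proof.
move=> x_tri; have [e e_ge0 x_eq] := C_BZ_comb_fund (conj (bzb_val x) x_tri).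
by rewrite /bz_triangle perm_liftE x_eq perm_lift_vec_comb; exact: nonneg_comb_fund.
Qed.

End BlockPermLift.

Lemma block_permsV s : s \in block_perms -> (s^-1)%g \in block_perms.
Proof.
move/block_permsP => s_rel; apply/block_permsP => k.
by rewrite -[in RHS](permKV s k) s_rel.
Qed.

Lemma perm_liftK s (s_block : s \in block_perms) :
  cancel (perm_lift s) (perm_lift (s^-1)%g).
Proof.
move=> x; apply: val_inj; rewrite !perm_liftE [perm_lift_vec s _]/perm_lift_vec sum_perm_fund.
rewrite perm_lift_vec_comb ?block_permsV // [RHS](bzcoefE (bzb_val x)).
by rewrite sum_perm_fund invgK; apply: eq_bigr => k _; rewrite permK.
Qed.

Lemma block_perm_in_G_BZ s : s \in block_perms -> exists2 f : Lam -> Lam, in_G_BZ f &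
  forall (x : Lam) (i : 'I_8), val x = fund i -> val (f x) = fund (s i).
Proof.
move=> s_block; have sV_block := block_permsV s_block.
exists (perm_lift s); last exact: perm_lift_fund.
split; [|split; [|split]].
- by move=> x y; apply: val_inj; rewrite val_lamD !perm_liftE val_lamD perm_lift_vecD ?bzb_val.
- exists (perm_lift (s^-1)%g); first exact: perm_liftK.
  by have := perm_liftK sV_block; rewrite invgK.
- exact: perm_lift_triangle.
move=> y y_tri; exists (perm_lift (s^-1)%g y); first exact: perm_lift_triangle.
by have := perm_liftK sV_block y; rewrite invgK.
Qed.

Local Close Scope ring_scope.

Section JoinPerm.

Local Open Scope group_scope.

Variables m n : nat.

Definition join_perm_fun (p : {perm 'I_m}) (q : {perm 'I_n}) (i : 'I_(m + n)) : 'I_(m + n) :=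
  unsplit (match split i with inl a => inl (p a) | inr b => inr (q b) end).

Lemma join_perm_fun_lshift p q a : join_perm_fun p q (lshift n a) = lshift n (p a).
Proof. by rewrite /join_perm_fun (unsplitK (inl a)). Qed.

Lemma join_perm_fun_rshift p q b : join_perm_fun p q (rshift m b) = rshift m (q b).
Proof. by rewrite /join_perm_fun (unsplitK (inr b)). Qed.

Lemma join_perm_funK p q : cancel (join_perm_fun p q) (join_perm_fun p^-1 q^-1).
Proof.
move=> i; case: (split_ordP i) => [a|b] ->.
  by rewrite !join_perm_fun_lshift permK.
by rewrite !join_perm_fun_rshift permK.
Qed.

Definition join_perm p q : {perm 'I_(m + n)} := perm (can_inj (join_perm_funK p q)).

Lemma join_perm_lshift p q a : join_perm p q (lshift n a) = lshift n (p a).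
Proof. by rewrite permE join_perm_fun_lshift. Qed.

Lemma join_perm_rshift p q b : join_perm p q (rshift m b) = rshift m (q b).
Proof. by rewrite permE join_perm_fun_rshift. Qed.

Lemma join_permM p1 p2 q1 q2 :
  join_perm (p1 * p2) (q1 * q2) = join_perm p1 q1 * join_perm p2 q2.
Proof.
apply/permP => i; rewrite permM; case: (split_ordP i) => [a|b] ->.
  by rewrite !join_perm_lshift permM.
by rewrite !join_perm_rshift permM.
Qed.

Lemma join_perm_inj p1 q1 p2 q2 : join_perm p1 q1 = join_perm p2 q2 -> p1 = p2 /\ q1 = q2.
Proof.
move=> eq12; split; apply/permP => c.
  by apply: (@lshift_inj m n); rewrite -(join_perm_lshift p1 q1) eq12 join_perm_lshift.
by apply: (@rshift_inj m n); rewrite -(join_perm_rshift p1 q1) eq12 join_perm_rshift.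
Qed.

Lemma join_perm_ltn p q i : (join_perm p q i < m) = (i < m).
Proof.
case: (split_ordP i) => [a|b] ->; first by rewrite join_perm_lshift /= !ltn_ord.
by rewrite join_perm_rshift /= !ltnNge !leq_addr.
Qed.

Lemma join_permP (s : {perm 'I_(m + n)}) :
  (forall i, (s i < m) = (i < m)) -> exists p q, s = join_perm p q.
Proof.
move=> s_ltn.
have s_lt (a : 'I_m) : s (lshift n a) < m by rewrite s_ltn /= ltn_ord.
have s_ge (b : 'I_n) : m <= s (rshift m b) by rewrite leqNgt s_ltn /= ltnNge leq_addr.
pose pf a := Ordinal (s_lt a); pose qf b := Ordinal (split_subproof (s_ge b)).
have pf_inj : injective pf.
  by move=> a1 a2 /(congr1 val) /= /val_inj /perm_inj /lshift_inj.
have qf_inj : injective qf.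
  move=> b1 b2 /(congr1 val) /= /(congr1 (addn m)); rewrite !subnKC //.
  by move/val_inj/perm_inj/rshift_inj.
exists (perm pf_inj), (perm qf_inj); apply/permP => i; apply: val_inj.
case: (split_ordP i) => [a|b] ->; first by rewrite join_perm_lshift permE.
by rewrite join_perm_rshift permE /= subnKC.
Qed.

End JoinPerm.

Lemma block_eq0 (i : 'I_8) : (block i == 0) = (i < 3).
Proof. by rewrite /block; case: ltnP => // _; case: ltnP. Qed.

Lemma block_rshift (c : 'I_5) : block (rshift 3 c) = if c < 3 then 1 else 2.
Proof. by rewrite /block /= -[6]/(3 + 3) ltn_add2l. Qed.

Definition Sym332 := ({perm 'I_3} * {perm 'I_3} * {perm 'I_2})%type.

Definition perm_of_blocks (x : Sym332) : {perm 'I_8} := join_perm x.1.1 (join_perm x.1.2 x.2).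

Lemma perm_of_blocksM : {in [set: Sym332] &, {morph perm_of_blocks : x y / (x * y)%g}}.
Proof. by move=> x y _ _; rewrite /perm_of_blocks !join_permM. Qed.

Canonical perm_of_blocks_morphism := Morphism perm_of_blocksM.

Lemma perm_of_blocks_injm : ('injm perm_of_blocks_morphism)%g.
Proof.
apply/injmP => -[[p1 q1] r1] [[p2 q2] r2] _ _ /=.
rewrite /perm_of_blocks /= => eq_pqr; have [-> eq_qr] := @join_perm_inj 3 5 p1 _ p2 _ eq_pqr.
by have [-> ->] := @join_perm_inj 3 2 q1 r1 q2 r2 eq_qr.
Qed.

Lemma block_permsE : block_perms = (perm_of_blocks_morphism @* [set: Sym332])%g.
Proof.
rewrite morphimEdom; apply/setP => s; rewrite inE; apply/forallP/imsetP => [s_block|].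
  have s_ltn i : (s i < 3) = (i < 3) by rewrite -!block_eq0 (eqP (s_block i)).
  have [p [t s_eq]] := @join_permP 3 5 s s_ltn.
  have t_ltn c : (t c < 3) = (c < 3).
    have := eqP (s_block (rshift 3 c)); rewrite s_eq (join_perm_rshift p t c) !block_rshift.
    by do 2!case: ifP.
  have [q [r t_eq]] := @join_permP 3 2 t t_ltn.
  by exists (p, q, r) => //; rewrite s_eq t_eq.
case=> [[[p q] r] _ ->] i; apply/eqP; rewrite /= /perm_of_blocks.
case: (@split_ordP 3 5 i) => [a|c] ->.
  by rewrite (join_perm_lshift p (join_perm q r) a) /block /= !ltn_ord.
by rewrite (join_perm_rshift p (join_perm q r) c) !block_rshift join_perm_ltn.
Qed.

Lemma block_perms_card_isog : #|block_perms| = 72 /\ block_perms \isog [set: Sym332].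
Proof.
have iso := sub_isog (subxx [set: Sym332]) perm_of_blocks_injm.
rewrite block_permsE isog_sym; split => //.
by rewrite -(card_isog iso) cardsT !card_prod !card_Sn.
Qed.

Local Open Scope ring_scope.

Theorem mainTheorem2 (R : realFieldType) :
  (* the extreme rays of C_BZ are exactly the rays spanned by the eight fundamental triangles *)
  (forall v : 'rV[R]_9,
      extreme_ray C_BZ v <-> exists i : 'I_8, exists2 t : R, 0 < t & v = t *: fund i) /\
  (* ... and these eight rays are pairwise distinct (exactly eight extreme rays) *)
  (forall (i j : 'I_8) (t : R), 0 < t -> fund i = t *: fund j -> i = j) /\
  (* the fundamental BZ triangles are BZ triangles *)
  (forall i : 'I_8, bzb (fund (R := int) i) && nonneg (fund (R := int) i)) /\
  (* they generate Lambda_BZ as an abelian group *)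
  (forall v : 'rV[int]_9, bzb v ->
      exists c : 'I_8 -> int, v = \sum_(i < 8) c i *: fund i) /\
  (* the only linear relation, up to scaling, is D1 + D3 + D5 = P + Q *)
  (forall c : 'I_8 -> R,
      \sum_(i < 8) c i *: fund i = 0 <-> exists t : R, forall i, c i = t * rel_coef i) /\
  (* restriction to the fundamental triangles: G_BZ -> block-preserving permutations *)
  (forall f : Lam -> Lam, in_G_BZ f ->
      exists2 s : {perm 'I_8}, s \in block_perms &
        forall (x : Lam) (i : 'I_8), val x = fund i -> val (f x) = fund (s i)) /\
  (* ... is surjective *)
  (forall s : {perm 'I_8}, s \in block_perms ->
      exists2 f : Lam -> Lam, in_G_BZ f &
        forall (x : Lam) (i : 'I_8), val x = fund i -> val (f x) = fund (s i)) /\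
  (* ... and injective *)
  (forall f g : Lam -> Lam, in_G_BZ f -> in_G_BZ g ->
      (forall (x : Lam) (i : 'I_8), val x = fund i -> f x = g x) -> f =1 g) /\
  (* hence |G_BZ| = 72 and G_BZ is isomorphic to S3 x S3 x S2 *)
  #|block_perms| = 72%N /\
  block_perms \isog [set: ({perm 'I_3} * {perm 'I_3} * {perm 'I_2})%type].
Proof.
split; first exact: extreme_ray_C_BZ.
split; first exact: fund_ray_inj.
split; first by move=> i; have [-> ->] := C_BZ_fund int i.
split; first by move=> v bz_v; exists (bzcoef v); exact: bzcoefE.
split; first exact: fund_relation.
split; first by move=> f fG; exists (G_perm fG); [exact: G_perm_block | exact: G_permE].
split; first exact: block_perm_in_G_BZ.
split; first exact: in_G_BZ_eq_fund.
exact: block_perms_card_isog.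
Qed.
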